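(* Let $D_1,\ldots,D_q\subseteq V\times V$ be demand graphs with $|D_i|=k$, reordered such that $\mathrm{mincut}_G(D_1)<\mathrm{mincut}_G(D_2)<\ldots<\mathrm{mincut}_G(D_q)$. Then the polynomials $P_{1}, P_{2}, \ldots, P_{q}$ are linearly independent.
   Context: $G=(V,E,w)$ is an undirected edge-weighted graph with $n=|V|$. For a partition $\Pi$ of $V$, $\Pi(v)$ is the part containing $v$, and $\mathrm{cut}_G(\Pi)=\sum_{uv\in E:\Pi(u)\neq\Pi(v)} w(uv)$. A partition agrees with (is feasible for) a demand graph $D$ if every $uv\in D$ has $\Pi(u)\neq\Pi(v)$, and $\mathrm{mincut}_G(D)$ is the minimum of $\mathrm{cut}_G(\Pi)$ over partitions agreeing with $D$. Each vertex $v$ gets a variable $\phi_v$ taking values in $[n]$ (a partition is instantiated by assigning each vertex a label of its part). For each demand graph $D_j$ define $P_j=\prod_{uv\in D_j}(\phi_u-\phi_v)$, a polynomial of degree $k$; a partition $\Pi$ is feasible for $D_j$ iff $P_j(\Pi)\neq 0$. *)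

From HB Require Import structures.
From mathcomp Require Import all_boot all_order all_algebra.
From mathcomp Require Import mpoly.
Set Implicit Arguments. Unset Strict Implicit. Unset Printing Implicit Defensive.
Import Order.TTheory GRing.Theory Num.Theory.
Local Open Scope ring_scope.

(* Vertex set V = 'I_n (so n = |V|).  The graph G = (V,E,w) is given by an
   edge relation E and a weight function w; an undirected edge {u,v} is
   counted once, via the representative with u < v. *)

(* A partition is instantiated by a labelling phi : V -> [n]. *)
Definition labelling (n : nat) := {ffun 'I_n -> 'I_n}.

Definition cut (R : numDomainType) (n : nat) (E : rel 'I_n) (w : 'I_n -> 'I_n -> R)
    (phi : labelling n) : R :=
  \sum_(u : 'I_n) \sum_(v : 'I_n | [&& (u < v)%N, E u v & phi u != phi v]) w u v.

Definition feasible (n : nat) (D : {set 'I_n * 'I_n}) (phi : labelling n) : bool :=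
  [forall e in D, phi e.1 != phi e.2].

Definition is_mincut (R : numDomainType) (n : nat) (E : rel 'I_n)
    (w : 'I_n -> 'I_n -> R) (D : {set 'I_n * 'I_n}) (m : R) : Prop :=
  (exists2 phi : labelling n, feasible D phi & cut E w phi = m) /\
  (forall phi : labelling n, feasible D phi -> m <= cut E w phi).

Definition demand_poly (R : ringType) (n : nat) (D : {set 'I_n * 'I_n})
    : {mpoly R[n]} :=
  \prod_(e in D) ('X_e.1 - 'X_e.2).

From HB Require Import structures.
From mathcomp Require Import all_boot all_order all_algebra.
From mathcomp Require Import mpoly.
Import Order.TTheory GRing.Theory Num.Theory.
Local Open Scope ring_scope.

(* Evaluate every P_j at a minimum cut Pi_i of D_i.  P_i(Pi_i) <> 0, while for
   j > i the partition Pi_i cuts less than mincut(D_j), so it is infeasible for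
   D_j and P_j(Pi_i) = 0.  The evaluation matrix is therefore triangular with a
   nonzero diagonal, which forces linear independence. *)

Lemma triangular_eval_free {R : idomainType} {n q : nat}
    (p : 'I_q -> {mpoly R[n]}) (x : 'I_q -> 'I_n -> R) :
  (forall i, meval (x i) (p i) != 0) ->
  (forall i j : 'I_q, (i < j)%N -> meval (x i) (p j) = 0) ->
  forall c : 'I_q -> R, \sum_(i < q) c i *: p i = 0 -> forall i, c i = 0.
Proof.
move=> diag_neq0 upper_eq0 c sum_eq0.
suff c_below : forall b (i : 'I_q), (i < b)%N -> c i = 0 by move=> i; apply: c_below.
elim=> [//|b IHb] i; rewrite ltnS leq_eqVlt => /orP[/eqP i_eq_b|]; last exact: IHb.
have := congr1 (meval (x i)) sum_eq0.
rewrite raddf_sum meval0 (bigD1 i) //= big1 ?addr0.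
  by rewrite mevalZ => /eqP; rewrite mulf_eq0 (negPf (diag_neq0 i)) orbF => /eqP.
move=> j j_neq_i; rewrite mevalZ.
have [j_lt_i|i_lt_j|j_eq_i] := ltngtP j i.
- by rewrite IHb ?mul0r // -i_eq_b.
- by rewrite upper_eq0 ?mulr0.
- by rewrite (val_inj j_eq_i) eqxx in j_neq_i.
Qed.

Definition label_point (R : nzSemiRingType) {n : nat} (phi : labelling n) : 'I_n -> R :=
  fun u => (phi u : nat)%:R.

Lemma meval_demand_poly_eq0 (R : numDomainType) (n : nat)
    (D : {set 'I_n * 'I_n}) (phi : labelling n) :
  (meval (label_point R phi) (demand_poly R D) == 0) = ~~ feasible D phi.
Proof.
rewrite /demand_poly rmorph_prod /= prodf_seq_eq0.
under eq_has => e do rewrite mevalB !mevalXU subr_eq0 eqr_nat.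
apply/hasP/forallPn => [[e _ /andP[eD /eqP/val_inj phi_eq]]|[e]].
  by exists e; rewrite eD phi_eq eqxx.
rewrite negb_imply negbK => /andP[eD phi_eq].
by exists e; rewrite ?mem_index_enum // eD (eqP phi_eq) eqxx.
Qed.

Lemma infeasible_below_mincut {R : numDomainType} {n : nat} {E : rel 'I_n}
    {w : 'I_n -> 'I_n -> R} {D : {set 'I_n * 'I_n}} {m : R} {phi : labelling n} :
  is_mincut E w D m -> cut E w phi < m -> ~~ feasible D phi.
Proof.
move=> [_ mincut_le] cut_lt; apply/negP => /mincut_le.
by rewrite (lt_geF cut_lt).
Qed.

Theorem lemma11 (R : realFieldType) (n : nat) (E : rel 'I_n)
    (w : 'I_n -> 'I_n -> R) (k q : nat) (D : 'I_q -> {set 'I_n * 'I_n})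
    (m : 'I_q -> R)
    (hsize : forall i, #|D i| = k)
    (hmin : forall i, is_mincut E w (D i) (m i))
    (hinc : forall i j : 'I_q, (i < j)%N -> m i < m j) :
  forall c : 'I_q -> R,
    \sum_(i < q) c i *: demand_poly R (D i) = 0 -> forall i, c i = 0.
Proof.
(* [hsize] only fixes the common degree k; independence does not need it. *)
have opt i : {phi : labelling n | feasible (D i) phi & cut E w phi = m i}.
  by apply: sig2_eqW; have [] := hmin i.
pose x i := label_point R (s2val (opt i)).
apply: (triangular_eval_free _ x) => [i|i j i_lt_j].
  by rewrite meval_demand_poly_eq0 negbK; case: (opt i).
apply/eqP; rewrite meval_demand_poly_eq0 /x.
case: (opt i) => phi _ /= cut_eq.
by apply: (infeasible_below_mincut (hmin j)); rewrite cut_eq hinc.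
Qed.
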